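(* Let $X=[0,\infty)\subset\mathbb{R}$ and $\mathcal{A}=\{\alpha_1,\dots,\alpha_m\}\subset\mathbb{R}$ with $\alpha_1<\cdots<\alpha_m$; identify $\mathbb{R}^{\mathcal{A}}$ with $\mathbb{R}^m$ (index $i$ for $\alpha_i$), with standard basis $\delta_1,\dots,\delta_m$. Then the normalized $X$-circuits of $\mathcal{A}$ are exactly the vectors of the following two types: (1) $\lambda=\delta_k-\delta_j$ with $1\le j<k\le m$; (2) for $1\le i<j<k\le m$, \[\lambda=\frac{\alpha_j-\alpha_i}{\alpha_k-\alpha_i}\,\delta_k+\frac{\alpha_k-\alpha_j}{\alpha_k-\alpha_i}\,\delta_i-\delta_j.\]
   Context: For a nonempty closed convex $X\subset\mathbb{R}^n$ and nonempty finite $\mathcal{A}\subset\mathbb{R}^n$: $\mathcal{A}\nu=\sum_\alpha\alpha\nu_\alpha$ for $\nu\in\mathbb{R}^{\mathcal{A}}$; $\sigma_X(y)=\sup\{y^Tx:x\in X\}\in\mathbb{R}\cup\{+\infty\}$; for $\beta\in\mathcal{A}$, $N_\beta=\{\nu\in\mathbb{R}^{\mathcal{A}}:\nu_\alpha\ge0\ \forall\alpha\neq\beta,\ \sum_\alpha\nu_\alpha=0\}$. A vector $\nu^\star\in N_\beta$ is an $X$-circuit of $\mathcal{A}$ if (1) $\nu^\star\neq0$, (2) $\sigma_X(-\mathcal{A}\nu^\star)<\infty$, and (3) $\nu^\star$ cannot be written as a convex combination of two non-proportional vectors $\nu^{(1)},\nu^{(2)}\in N_\beta$ such that the map $\nu\mapsto\sigma_X(-\mathcal{A}\nu)$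 is affine on the segment $[\nu^{(1)},\nu^{(2)}]$. An $X$-circuit is normalized if its unique negative entry equals $-1$. *)

From HB Require Import structures.
From mathcomp Require Import all_boot all_order all_algebra.
From mathcomp Require Import all_classical all_reals ereal.
Set Implicit Arguments. Unset Strict Implicit. Unset Printing Implicit Defensive.
Import Order.TTheory GRing.Theory Num.Theory.
Local Open Scope ring_scope.
Local Open Scope classical_set_scope.

(* Setting n = 1: X is a subset of R, the support A = {alpha_1,...,alpha_m}
   is given by alpha : 'I_m -> R, and R^A is identified with 'I_m -> R. *)

Section XCircuits.
Variables (R : realType) (m : nat).

Definition Amul (alpha : 'I_m -> R) (nu : 'I_m -> R) : R :=
  \sum_(i < m) alpha i * nu i.

Definition support_fun (X : set R) (y : R) : \bar R :=
  ereal_sup [set (y * x)%:E | x in X].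

Definition Ncone (beta : 'I_m) : set ('I_m -> R) :=
  [set nu | (forall i, i != beta -> 0 <= nu i) /\ \sum_(i < m) nu i = 0].

Definition proportional (nu1 nu2 : 'I_m -> R) : Prop :=
  exists c : R, (forall i, nu1 i = c * nu2 i) \/ (forall i, nu2 i = c * nu1 i).

Definition affine_on_segment (f : ('I_m -> R) -> \bar R) (nu1 nu2 : 'I_m -> R) :
  Prop :=
  exists a b : R, forall t : R, 0 <= t <= 1 ->
    f (fun i => (1 - t) * nu1 i + t * nu2 i) = (a + b * t)%:E.

Definition is_X_circuit (X : set R) (alpha : 'I_m -> R) (beta : 'I_m)
    (nu : 'I_m -> R) : Prop :=
  [/\ Ncone beta nu,
      nu <> (fun _ => 0),
      (support_fun X (- Amul alpha nu) < +oo)%E &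
      ~ (exists (nu1 nu2 : 'I_m -> R) (t : R),
           [/\ Ncone beta nu1 /\ Ncone beta nu2, 0 < t < 1,
               (forall i, nu i = t * nu1 i + (1 - t) * nu2 i),
               (~ proportional nu1 nu2) &
               affine_on_segment (fun v => support_fun X (- Amul alpha v))
                 nu1 nu2])].

Definition normalized (nu : 'I_m -> R) : Prop :=
  exists j, nu j = -1 /\ forall i, i != j -> 0 <= nu i.

End XCircuits.

From HB Require Import structures.
From mathcomp Require Import all_boot all_order all_algebra.
From mathcomp Require Import all_classical all_reals ereal.
From mathcomp Require Import ring lra.
Set Implicit Arguments. Unset Strict Implicit. Unset Printing Implicit Defensive.
Import Order.TTheory GRing.Theory Num.Theory.
Local Open Scope ring_scope.
Local Open Scope classical_set_scope.

(* For X = [0,oo) the support function sigma_X(y) is 0 when y <= 0 and +oo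
   otherwise, so F(nu) := sigma_X(-A nu) is finite exactly when A nu >= 0, and
   F is affine on a segment exactly when A is nonnegative at both endpoints.
   Being an X-circuit thus becomes a purely linear condition, and we prove:
   - a rigidity criterion: nu in N_beta with nu_beta = -1 and A nu >= 0 is a
     circuit as soon as every nu' in N_beta supported in supp(nu) (and with
     A nu' = 0 when A nu = 0) is a multiple of nu; both families of the
     statement satisfy it, since the vectors with sum 0 supported on {j, k},
     resp. annihilated by A and supported on {i, j, k}, form a line
     (backward direction);
   - a perturbation criterion: a circuit admits no direction v supported on
     the positive entries of nu, with sum 0 and with A v = 0 unless A nu > 0,
     since nu +- e v would split it.  Hence a normalized circuit has at most
     two positive entries, exactly two only if A nu = 0, and the same two
     lines give the two families (forward direction). *)

Lemma convex_comb_eq0 (R : realFieldType) (t x y : R) :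
  0 < t < 1 -> 0 <= x -> 0 <= y -> t * x + (1 - t) * y = 0 -> x = 0 /\ y = 0.
Proof.
move=> /andP[t0 t1] x0 y0 e.
have tx0 : 0 <= t * x by rewrite mulr_ge0 // ltW.
have ty0 : 0 <= (1 - t) * y by rewrite mulr_ge0 // subr_ge0 ltW.
have /eqP : t * x = 0 by lra.
rewrite mulf_eq0 (gt_eqF t0) => /eqP->.
have /eqP : (1 - t) * y = 0 by lra.
by rewrite mulf_eq0 subr_eq0 (gt_eqF t1) => /eqP->.
Qed.

Lemma small_scaling (R : realFieldType) (I : finType) (c x : I -> R) :
  (forall i, c i != 0 -> 0 < x i) ->
  exists2 e : R, 0 < e & forall i, c i != 0 -> `|e * c i| <= x i.
Proof.
move=> hx; pose e := \big[Num.min/1]_(i | c i != 0) (x i / `|c i|).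
have e0 : 0 < e.
  apply: (big_ind (fun y => 0 < y)) => // [y z y0 z0|i ci].
    by rewrite lt_min y0 z0.
  by rewrite divr_gt0 ?normr_gt0 ?hx.
exists e => // i ci; rewrite normrM gtr0_norm // -ler_pdivlMr ?normr_gt0 //.
by rewrite /e (bigD1 i) //= ge_min lexx.
Qed.

Lemma ord_lt_neq (m : nat) (i j : 'I_m) : (i < j)%N -> i != j.
Proof. by move=> ij; rewrite -val_eqE neq_ltn ij. Qed.

Section SupportSums.
Variables (V : nmodType) (m : nat).
Implicit Types f : 'I_m -> V.

Lemma sum_two f (i j : 'I_m) : i != j ->
  (forall l, l != i -> l != j -> f l = 0) -> \sum_(l < m) f l = f i + f j.
Proof.
move=> ij f0; rewrite (bigD1 i) //= (bigD1 j) 1?eq_sym //= addrA.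
by rewrite big1 ?addr0 // => l /andP[li lj]; rewrite f0.
Qed.

Lemma sum_three f (i j k : 'I_m) : i != j -> j != k -> i != k ->
  (forall l, l != i -> l != j -> l != k -> f l = 0) ->
  \sum_(l < m) f l = f i + f j + f k.
Proof.
move=> ij jk ik f0; rewrite (bigD1 i) //= (bigD1 j) 1?eq_sym //=.
rewrite (bigD1 k) /=; last by rewrite eq_sym ik eq_sym jk.
by rewrite big1 ?addr0 ?addrA // => l /andP[/andP[li lj] lk]; rewrite f0.
Qed.

End SupportSums.

Section NormalizedCone.
Variables (R : realType) (m : nat).
Implicit Types f : 'I_m -> R.

Lemma normalizedP (beta : 'I_m) f : Ncone beta f -> normalized f <-> f beta = -1.
Proof.
move=> [fpos _]; split => [[j [fj _]]|fb]; last by exists beta.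
case: (eqVneq j beta) => [<- //|jb].
by have := fpos j jb; rewrite fj ler0N1.
Qed.

Lemma exists_positive (beta : 'I_m) f :
  Ncone beta f -> f beta = -1 -> exists p, 0 < f p.
Proof.
move=> [fpos fsum] fb; case: (pickP (fun p => 0 < f p)) => [p fp|nopos].
  by exists p.
have f0 l : l != beta -> f l = 0.
  by move=> lb; apply/eqP; rewrite eq_le fpos // andbT leNgt nopos.
move: fsum; rewrite (bigD1 beta) //= big1 ?fb => [|l /f0 //].
by rewrite addr0 => /eqP; rewrite oppr_eq0 oner_eq0.
Qed.

End NormalizedCone.

Section HalfLineSupport.
Variable R : realType.
Local Notation X0 := [set x : R | 0 <= x].

Lemma support_halfline_nonpos (y : R) : y <= 0 -> support_fun X0 y = 0%E.
Proof.
move=> y0; apply/eqP; rewrite eq_le; apply/andP; split.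
  by apply: ge_ereal_sup => _ [x /= x0 <-]; rewrite lee_fin mulr_le0_ge0.
by apply: ereal_sup_ubound; exists 0 => //=; rewrite mulr0.
Qed.

Lemma support_halfline_finite (y : R) : (support_fun X0 y < +oo)%E -> y <= 0.
Proof.
move=> yfin; rewrite leNgt; apply/negP => y0.
have : (0 <= support_fun X0 y)%E.
  by apply: ereal_sup_ubound; exists 0 => //=; rewrite mulr0.
move: yfin; case E: (support_fun X0 y) => [s| |] //= _; rewrite lee_fin => s0.
have : ((y * ((s + 1) / y))%:E <= support_fun X0 y)%E.
  apply: ereal_sup_ubound; exists ((s + 1) / y) => //=.
  by rewrite divr_ge0 ?ltW //; lra.
by rewrite E lee_fin mulrC divfK ?gt_eqF //; lra.
Qed.

End HalfLineSupport.

Section Circuits.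
Variables (R : realType) (m : nat) (alpha : 'I_m -> R).
Implicit Types (f g v w nu lam : 'I_m -> R).
Local Notation X0 := [set x : R | 0 <= x].
Local Notation F := (fun v => support_fun X0 (- Amul alpha v)).

Lemma Amul_add f g :
  Amul alpha (fun i => f i + g i) = Amul alpha f + Amul alpha g.
Proof. by rewrite /Amul -big_split; apply: eq_bigr => i _; rewrite mulrDr. Qed.

Lemma Amul_sub f g :
  Amul alpha (fun i => f i - g i) = Amul alpha f - Amul alpha g.
Proof. by rewrite /Amul -sumrB; apply: eq_bigr => i _; rewrite mulrBr. Qed.

Lemma Amul_scale (c : R) f : Amul alpha (fun i => c * f i) = c * Amul alpha f.
Proof. by rewrite /Amul mulr_sumr; apply: eq_bigr => i _; rewrite mulrCA. Qed.

Lemma F_eq0 v : 0 <= Amul alpha v -> F v = 0%E.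
Proof. by move=> Av; apply: support_halfline_nonpos; rewrite oppr_le0. Qed.

Lemma Amul_ge0_of_F_finite v : (F v < +oo)%E -> 0 <= Amul alpha v.
Proof. by move/support_halfline_finite; rewrite oppr_le0. Qed.

Lemma affine_on_segmentP v1 v2 :
  affine_on_segment F v1 v2 <-> 0 <= Amul alpha v1 /\ 0 <= Amul alpha v2.
Proof.
split=> [[a [b Faff]]|[A1 A2]]; last first.
  exists 0, 0 => t /andP[t0 t1]; rewrite F_eq0 ?mul0r ?addr0 //.
  by rewrite Amul_add !Amul_scale addr_ge0 // mulr_ge0 // subr_ge0.
have end0 : (fun i => (1 - 0) * v1 i + 0 * v2 i) = v1.
  by apply/funext => i; rewrite subr0 mul1r mul0r addr0.
have end1 : (fun i => (1 - 1) * v1 i + 1 * v2 i) = v2.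
  by apply/funext => i; rewrite subrr mul1r mul0r add0r.
have := Faff 0; have := Faff 1; rewrite lexx ler01 end0 end1 => F2 F1.
by split; apply: Amul_ge0_of_F_finite; rewrite ?F1 ?F2 ?ltry ?lexx.
Qed.

Lemma proportional_multiples nu v1 v2 (a b : R) :
  (forall l, v1 l = a * nu l) -> (forall l, v2 l = b * nu l) ->
  proportional v1 v2.
Proof.
move=> h1 h2; have [b0|b0] := eqVneq b 0.
  by exists 0; right => l; rewrite h2 b0 !mul0r.
by exists (a / b); left => l; rewrite h1 h2 mulrA divfK.
Qed.

(* Rigidity criterion: if the only vectors of N_beta supported in supp(nu),
   and annihilated by A when nu is, are the multiples of nu, then nu is an
   X-circuit, because both ends of any splitting segment are such vectors. *)
Lemma rigid_is_X_circuit beta nu :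
  Ncone beta nu -> nu beta = -1 -> 0 <= Amul alpha nu ->
  (forall v, Ncone beta v -> (forall l, nu l = 0 -> v l = 0) ->
     (Amul alpha nu = 0 -> Amul alpha v = 0) ->
     forall l, v l = - v beta * nu l) ->
  is_X_circuit X0 alpha beta nu.
Proof.
move=> Nnu nub Anu rigid; split=> //.
- by move/(congr1 (@^~ beta)) => /eqP; rewrite nub oppr_eq0 oner_eq0.
- by rewrite F_eq0 ?ltry.
move=> [v1 [v2 [t [[N1 N2] t01 nu_split nonprop /affine_on_segmentP[A1 A2]]]]].
apply: nonprop; have [pos1 _] := N1; have [pos2 _] := N2.
have supp l : nu l = 0 -> v1 l = 0 /\ v2 l = 0.
  move=> nul; have lb : l != beta.
    by apply: contra_eqN nul => /eqP->; rewrite nub oppr_eq0 oner_eq0.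
  by apply: (convex_comb_eq0 t01); rewrite ?pos1 ?pos2 // -nu_split.
have tight : Amul alpha nu = 0 -> Amul alpha v1 = 0 /\ Amul alpha v2 = 0.
  move=> nuA; apply: (convex_comb_eq0 t01) => //.
  rewrite -!Amul_scale -Amul_add -nuA; congr Amul.
  by apply/funext => l; rewrite nu_split.
apply: (@proportional_multiples nu _ _ (- v1 beta) (- v2 beta)).
  by apply: rigid => // [l /supp[]|/tight[]].
by apply: rigid => // [l /supp[]|/tight[]].
Qed.

(* Splitting nu = (nu + w)/2 + (nu - w)/2 along a small direction w. *)
Lemma symmetric_split_not_circuit beta lam w (l0 : 'I_m) :
  lam beta = -1 -> w beta = 0 -> w l0 != 0 -> \sum_(i < m) w i = 0 ->
  (forall i, i != beta -> `|w i| <= lam i) ->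
  `|Amul alpha w| <= Amul alpha lam ->
  ~ is_X_circuit X0 alpha beta lam.
Proof.
move=> lb wb wl0 wsum wsmall Asmall [[_ lsum] _ _ []].
have split_pm (x y : R) : `|y| <= x -> 0 <= x + y /\ 0 <= x - y.
  by rewrite ler_norml => /andP[? ?]; split; lra.
exists (fun i => lam i + w i), (fun i => lam i - w i), (1 / 2); split.
- split; split.
  + by move=> i /wsmall /split_pm[].
  + by rewrite big_split /= lsum wsum addr0.
  + by move=> i /wsmall /split_pm[].
  + by rewrite sumrB lsum wsum subr0.
- by apply/andP; split; lra.
- by move=> i; lra.
- move=> [c prop]; have c1 : c = 1.
    by case: prop => /(_ beta) /=; rewrite lb wb addr0 subr0 mulrN1 => /oppr_inj.
  by move/eqP: wl0; apply; case: prop => /(_ l0) /=; rewrite c1 mul1r; lra.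
- by apply/affine_on_segmentP; rewrite Amul_add Amul_sub; apply: split_pm.
Qed.

Lemma perturbation_not_circuit beta lam v (l0 : 'I_m) :
  lam beta = -1 -> v l0 != 0 -> \sum_(i < m) v i = 0 ->
  (forall i, v i != 0 -> 0 < lam i) ->
  (Amul alpha v != 0 -> 0 < Amul alpha lam) ->
  ~ is_X_circuit X0 alpha beta lam.
Proof.
move=> lb vl0 vsum vpos Apos C; have [[lpos _] _ lfin _] := C.
have vb : v beta = 0.
  by apply/eqP; apply: contraT => /vpos; rewrite lb ltr0N1.
pose c o := if o is Some i then v i else Amul alpha v.
pose x o := if o is Some i then lam i else Amul alpha lam.
have [e e0 esmall] : exists2 e : R, 0 < e &
    forall o, c o != 0 -> `|e * c o| <= x o.
  by apply: small_scaling => -[i /vpos|/Apos].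
apply: (@symmetric_split_not_circuit beta lam (fun i => e * v i) l0) => //.
- by rewrite vb mulr0.
- by rewrite mulf_eq0 negb_or gt_eqF.
- by rewrite -mulr_sumr vsum mulr0.
- move=> i ib; have [vi0|vi] := eqVneq (v i) 0; last exact: (esmall (Some i)).
  by rewrite vi0 mulr0 normr0 lpos.
- rewrite Amul_scale; have [Av0|Av] := eqVneq (Amul alpha v) 0.
    by rewrite Av0 mulr0 normr0 Amul_ge0_of_F_finite.
  exact: (esmall None).
Qed.

(* Two positive entries of a circuit force A nu = 0: otherwise move mass
   between them along e_p - e_q. *)
Lemma two_positive_tight beta lam (p q : 'I_m) :
  is_X_circuit X0 alpha beta lam -> lam beta = -1 -> p != q ->
  0 < lam p -> 0 < lam q -> Amul alpha lam = 0.
Proof.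
move=> C lb pq pp qp; have [_ _ lfin _] := C.
apply/eqP; apply: contraT => Aneq; exfalso.
pose v l : R := (l == p)%:R - (l == q)%:R.
have vp : v p = 1 by rewrite /v eqxx (negbTE pq) subr0.
have vq : v q = -1 by rewrite /v eqxx eq_sym (negbTE pq) sub0r.
have v0 l : l != p -> l != q -> v l = 0.
  by move=> lp lq; rewrite /v (negbTE lp) (negbTE lq) subr0.
apply: (@perturbation_not_circuit beta lam v p) => //.
- by rewrite vp oner_eq0.
- by rewrite (sum_two pq v0) vp vq subrr.
- move=> l; have [->|lp] := eqVneq l p => //; have [->|lq] := eqVneq l q => //.
  by rewrite v0 ?eqxx.
- by move=> _; rewrite lt_def Aneq Amul_ge0_of_F_finite.
Qed.

End Circuits.

Section Classification.
Variables (R : realType) (m : nat) (alpha : 'I_m -> R).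
Hypothesis halpha : forall i j : 'I_m, (i < j)%N -> alpha i < alpha j.
Implicit Types (v lam : 'I_m -> R).
Local Notation X0 := [set x : R | 0 <= x].

Definition pair_circuit (j k : 'I_m) : 'I_m -> R :=
  fun l => (l == k)%:R - (l == j)%:R.

(* Type (2): the affine dependence expressing alpha_j as a convex combination
   of alpha_i and alpha_k. *)
Definition triple_circuit (i j k : 'I_m) : 'I_m -> R := fun l =>
  (alpha j - alpha i) / (alpha k - alpha i) * (l == k)%:R
  + (alpha k - alpha j) / (alpha k - alpha i) * (l == i)%:R - (l == j)%:R.

Lemma alpha_inj (i j : 'I_m) : i != j -> alpha i != alpha j.
Proof.
by rewrite -val_eqE neq_ltn => /orP[/halpha/lt_eqF|/halpha/gt_eqF] ->.
Qed.

Lemma lt_of_alpha_lt (i j : 'I_m) : alpha i < alpha j -> (i < j)%N.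
Proof.
move=> aij; rewrite ltnNge leq_eqVlt negb_or; apply/andP; split.
  by apply: contraTN aij => /eqP/val_inj->; rewrite ltxx.
by apply: contraTN aij => /halpha/lt_gtF->.
Qed.

Lemma pair_circuitE (j k : 'I_m) : j != k ->
  [/\ pair_circuit j k j = -1, pair_circuit j k k = 1 &
      forall l, l != j -> l != k -> pair_circuit j k l = 0].
Proof.
move=> jk; have kj : k != j by rewrite eq_sym.
rewrite /pair_circuit !eqxx (negbTE jk) (negbTE kj) sub0r subr0.
by split => // l /negbTE-> /negbTE->; rewrite subr0.
Qed.

Lemma triple_circuitE (i j k : 'I_m) : i != j -> j != k -> i != k ->
  [/\ triple_circuit i j k i = (alpha k - alpha j) / (alpha k - alpha i),
      triple_circuit i j k j = -1,
      triple_circuit i j k k = (alpha j - alpha i) / (alpha k - alpha i) &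
      forall l, l != i -> l != j -> l != k -> triple_circuit i j k l = 0].
Proof.
move=> ij jk ik; have ji : j != i by rewrite eq_sym.
have kj : k != j by rewrite eq_sym. have ki : k != i by rewrite eq_sym.
rewrite /triple_circuit !eqxx (negbTE ij) (negbTE ji) (negbTE jk) (negbTE kj).
rewrite (negbTE ik) (negbTE ki) !mulr0 !mulr1 !subr0 ?add0r ?addr0 ?sub0r.
split => // l /negbTE-> /negbTE-> /negbTE->.
by rewrite !mulr0 addr0 subr0.
Qed.

Lemma Amul_pair_circuit (j k : 'I_m) : j != k ->
  Amul alpha (pair_circuit j k) = alpha k - alpha j.
Proof.
move=> jk; have [cj ck c0] := pair_circuitE jk.
rewrite /Amul (sum_two jk) ?cj ?ck => [|l lj lk]; last by rewrite c0 ?mulr0.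
by rewrite mulrN1 mulr1 addrC.
Qed.

Lemma Amul_triple_circuit (i j k : 'I_m) : i != j -> j != k -> i != k ->
  Amul alpha (triple_circuit i j k) = 0.
Proof.
move=> ij jk ik; have [ci cj ck c0] := triple_circuitE ij jk ik.
have dne : alpha k - alpha i != 0 by rewrite subr_eq0 alpha_inj // eq_sym.
rewrite /Amul (sum_three ij jk ik) ?ci ?cj ?ck => [|l li lj lk]; first by field.
by rewrite c0 ?mulr0.
Qed.

Lemma pair_circuit_spans (j k : 'I_m) v : j != k ->
  (forall l, l != j -> l != k -> v l = 0) -> \sum_(l < m) v l = 0 ->
  forall l, v l = - v j * pair_circuit j k l.
Proof.
move=> jk v0; rewrite (sum_two jk v0) => vsum l.
have [cj ck c0] := pair_circuitE jk.
have [->|lj] := eqVneq l j; first by rewrite cj mulrN1 opprK.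
have [->|lk] := eqVneq l k; first by rewrite ck mulr1; lra.
by rewrite c0 // mulr0 v0.
Qed.

Lemma triple_circuit_spans (i j k : 'I_m) v : i != j -> j != k -> i != k ->
  (forall l, l != i -> l != j -> l != k -> v l = 0) ->
  \sum_(l < m) v l = 0 -> Amul alpha v = 0 ->
  forall l, v l = - v j * triple_circuit i j k l.
Proof.
move=> ij jk ik v0; rewrite (sum_three ij jk ik v0) => vsum.
rewrite /Amul (sum_three ij jk ik) => [vA l|l li lj lk]; last first.
  by rewrite v0 ?mulr0.
have [ci cj ck c0] := triple_circuitE ij jk ik.
have dne : alpha k - alpha i != 0 by rewrite subr_eq0 alpha_inj // eq_sym.
have vi : v i * (alpha k - alpha i) = - v j * (alpha k - alpha j).
  transitivity (alpha k * (v i + v j + v k) - v j * (alpha k - alpha j)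
                - (alpha i * v i + alpha j * v j + alpha k * v k)); first by ring.
  by rewrite vsum vA; ring.
have vk : v k * (alpha k - alpha i) = - v j * (alpha j - alpha i).
  transitivity ((alpha i * v i + alpha j * v j + alpha k * v k)
                - alpha i * (v i + v j + v k) - v j * (alpha j - alpha i)).
    by ring.
  by rewrite vsum vA; ring.
have [->|li] := eqVneq l i.
  by rewrite ci; apply: (mulIf dne); rewrite mulrA divfK.
have [->|lj] := eqVneq l j; first by rewrite cj mulrN1 opprK.
have [->|lk] := eqVneq l k.
  by rewrite ck; apply: (mulIf dne); rewrite mulrA divfK.
by rewrite c0 // mulr0 v0.
Qed.

Lemma pair_circuit_is_X_circuit (j k : 'I_m) :
  (j < k)%N -> is_X_circuit X0 alpha j (pair_circuit j k).
Proof.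
move=> jk; have jk' := ord_lt_neq jk; have [cj ck c0] := pair_circuitE jk'.
apply: rigid_is_X_circuit => //.
- split; first by move=> l lj; rewrite /pair_circuit (negbTE lj) subr0 ler0n.
  by rewrite (sum_two jk' c0) cj ck addNr.
- by rewrite Amul_pair_circuit // subr_ge0 ltW ?halpha.
move=> v [_ vsum] vsupp _; apply: pair_circuit_spans => // l lj lk.
by rewrite vsupp ?c0.
Qed.

Lemma triple_circuit_is_X_circuit (i j k : 'I_m) :
  (i < j)%N -> (j < k)%N -> is_X_circuit X0 alpha j (triple_circuit i j k).
Proof.
move=> ij jk; have ik := ltn_trans ij jk.
have [ij' jk' ik'] := And3 (ord_lt_neq ij) (ord_lt_neq jk) (ord_lt_neq ik).
have [ci cj ck c0] := triple_circuitE ij' jk' ik'.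
have aik : alpha i < alpha k by rewrite halpha.
have A0 := Amul_triple_circuit ij' jk' ik'.
apply: rigid_is_X_circuit => //; last 2 first.
- by rewrite A0.
- move=> v [_ vsum] vsupp /(_ A0) vA.
  by apply: triple_circuit_spans => // l li lj lk; rewrite vsupp ?c0.
split; last first.
  by rewrite (sum_three ij' jk' ik' c0) ci cj ck; field; rewrite gt_eqF ?subr_gt0.
move=> l lj; rewrite /triple_circuit (negbTE lj) subr0.
by rewrite addr_ge0 // mulr_ge0 // divr_ge0 // subr_ge0 ltW ?halpha.
Qed.

(* Three positive entries p, q, r allow the perturbation along the affine
   dependence (alpha_q - alpha_r, alpha_r - alpha_p, alpha_p - alpha_q). *)
Lemma three_positive_not_circuit beta lam (p q r : 'I_m) :
  lam beta = -1 -> p != q -> q != r -> p != r ->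
  0 < lam p -> 0 < lam q -> 0 < lam r -> ~ is_X_circuit X0 alpha beta lam.
Proof.
move=> lb pq qr pr pp qp rp.
have [qp' rq rp'] : [/\ q != p, r != q & r != p].
  by split; rewrite eq_sym.
pose v l : R := (alpha q - alpha r) * (l == p)%:R
  + (alpha r - alpha p) * (l == q)%:R + (alpha p - alpha q) * (l == r)%:R.
have vp : v p = alpha q - alpha r.
  by rewrite /v eqxx (negbTE pq) (negbTE pr) !mulr0 mulr1 !addr0.
have vq : v q = alpha r - alpha p.
  by rewrite /v eqxx (negbTE qp') (negbTE qr) !mulr0 mulr1 addr0 add0r.
have vr : v r = alpha p - alpha q.
  by rewrite /v eqxx (negbTE rp') (negbTE rq) !mulr0 mulr1 !add0r.
have v0 l : l != p -> l != q -> l != r -> v l = 0.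
  move=> lp lq lr; rewrite /v (negbTE lp) (negbTE lq) (negbTE lr).
  by rewrite !mulr0 !addr0.
have Av : Amul alpha v = 0.
  rewrite /Amul (sum_three pq qr pr) ?vp ?vq ?vr => [|l lp lq lr]; first by ring.
  by rewrite v0 ?mulr0.
apply: (@perturbation_not_circuit _ _ alpha beta lam v p) => //.
- by rewrite vp subr_eq0 alpha_inj.
- by rewrite (sum_three pq qr pr v0) vp vq vr; ring.
- move=> l; have [->|lp] := eqVneq l p => //; have [->|lq] := eqVneq l q => //.
  by have [->|lr] := eqVneq l r => //; rewrite v0 ?eqxx.
- by rewrite Av eqxx.
Qed.

Lemma pair_circuit_of_support (beta p : 'I_m) lam :
  lam beta = -1 -> p != beta -> (forall l, l != beta -> l != p -> lam l = 0) ->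
  \sum_(l < m) lam l = 0 -> 0 <= Amul alpha lam ->
  (beta < p)%N /\ lam = pair_circuit beta p.
Proof.
move=> lb pb l0 lsum A0; have bp : beta != p by rewrite eq_sym.
have lE : lam = pair_circuit beta p.
  by apply/funext => l; rewrite (pair_circuit_spans bp l0 lsum) lb opprK mul1r.
split=> //; apply: lt_of_alpha_lt; rewrite lt_def alpha_inj //=.
by rewrite -subr_ge0 -(Amul_pair_circuit bp) -lE.
Qed.

(* A normalized circuit with exactly two positive entries p < q and A nu = 0
   is the affine dependence of alpha_p, alpha_beta, alpha_q, and the
   positivity of its entries forces p < beta < q. *)
Lemma triple_circuit_of_support (beta p q : 'I_m) lam :
  (p < q)%N -> lam beta = -1 -> 0 < lam p -> 0 < lam q ->
  (forall l, l != beta -> l != p -> l != q -> lam l = 0) ->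
  \sum_(l < m) lam l = 0 -> Amul alpha lam = 0 ->
  [/\ (p < beta)%N, (beta < q)%N & lam = triple_circuit p beta q].
Proof.
move=> pq lb pp qp l0 lsum A0.
have pb : p != beta by apply: contraTneq pp => ->; rewrite lb ltr0N1.
have qb : q != beta by apply: contraTneq qp => ->; rewrite lb ltr0N1.
have [pq' bq] : p != q /\ beta != q by rewrite ord_lt_neq // eq_sym.
have l0' l : l != p -> l != beta -> l != q -> lam l = 0.
  by move=> lp lb' lq; rewrite l0.
have lE : lam = triple_circuit p beta q.
  apply/funext => l.
  by rewrite (triple_circuit_spans pb bq pq' l0' lsum A0) lb opprK mul1r.
have [cp _ cq _] := triple_circuitE pb bq pq'.
have d0 : 0 < alpha q - alpha p by rewrite subr_gt0 halpha.
have ratio_gt0 (x : R) : 0 < x / (alpha q - alpha p) -> 0 < x.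
  by move=> /(mulr_gt0 d0); rewrite mulrC divfK ?gt_eqF.
split=> //; apply: lt_of_alpha_lt; rewrite -subr_gt0; apply: ratio_gt0.
  by rewrite -cq -lE.
by rewrite -cp -lE.
Qed.

Lemma normalized_circuit_shape beta lam :
  is_X_circuit X0 alpha beta lam -> normalized lam ->
  (exists j k : 'I_m, (j < k)%N /\ lam = pair_circuit j k) \/
  (exists i j k : 'I_m, (i < j)%N /\ (j < k)%N /\ lam = triple_circuit i j k).
Proof.
move=> C; have [N _ lfin _] := C; have [lpos lsum] := N.
move/(normalizedP N) => lb; have A0 := Amul_ge0_of_F_finite lfin.
have [p pp] := exists_positive N lb.
have pb : p != beta by apply: contraTneq pp => ->; rewrite lb ltr0N1.
have nonpos_zero l : l != beta -> ~~ (0 < lam l) -> lam l = 0.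
  by move=> lb'; rewrite -leNgt => lle0; apply/eqP; rewrite eq_le lle0 lpos.
case: (pickP (fun q => (q != p) && (0 < lam q))) => [q /andP[qp qq]|single].
  right; have pq : p != q by rewrite eq_sym.
  have l0 l : l != beta -> l != p -> l != q -> lam l = 0.
    move=> lb' lp lq; apply: nonpos_zero => //; apply/negP => lpos'.
    apply: (three_positive_not_circuit lb pq _ _ pp qq lpos' C);
      by rewrite eq_sym.
  have Aeq := two_positive_tight C lb pq pp qq.
  case: (ltngtP p q) => [pq'|qp'|pq_eq].
  - by have [? ? ->] := triple_circuit_of_support pq' lb pp qq l0 lsum Aeq;
      exists p, beta, q.
  - have l0' l : l != beta -> l != q -> l != p -> lam l = 0.
      by move=> ? ? ?; apply: l0.
    by have [? ? ->] := triple_circuit_of_support qp' lb qq pp l0' lsum Aeq;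
      exists q, beta, p.
  - by rewrite -val_eqE /= pq_eq eqxx in pq.
left; exists beta, p; apply: pair_circuit_of_support => // l lb' lp.
by apply: nonpos_zero => //; move: (single l); rewrite /= lp /= => ->.
Qed.

End Classification.

Theorem mainTheorem19 (R : realType) (m : nat) (alpha : 'I_m -> R)
    (halpha : forall i j : 'I_m, (i < j)%N -> alpha i < alpha j)
    (lam : 'I_m -> R) :
  ((exists beta, is_X_circuit [set x : R | 0 <= x] alpha beta lam)
     /\ normalized lam)
  <->
  ((exists j k : 'I_m, (j < k)%N /\
      forall l, lam l = (l == k)%:R - (l == j)%:R)
   \/
   (exists i j k : 'I_m, (i < j)%N /\ (j < k)%N /\
      forall l, lam l =
        (alpha j - alpha i) / (alpha k - alpha i) * (l == k)%:R
        + (alpha k - alpha j) / (alpha k - alpha i) * (l == i)%:R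
        - (l == j)%:R)).
Proof.
split=> [[[beta C] lnorm]|].
  case: (normalized_circuit_shape halpha C lnorm).
    by move=> [j [k [jk ->]]]; left; exists j, k.
  by move=> [i [j [k [ij [jk ->]]]]]; right; exists i, j, k.
case=> [[j [k [jk /funext ->]]]|[i [j [k [ij [jk /funext ->]]]]]].
  have C := pair_circuit_is_X_circuit halpha jk; have [N _ _ _] := C.
  split; first by exists j.
  by apply/(normalizedP N); have [cj _ _] := pair_circuitE R (ord_lt_neq jk).
have C := triple_circuit_is_X_circuit halpha ij jk; have [N _ _ _] := C.
split; first by exists j.
apply/(normalizedP N); have ik := ltn_trans ij jk.
have [ij' jk' ik'] := And3 (ord_lt_neq ij) (ord_lt_neq jk) (ord_lt_neq ik).
by have [_ cj _ _] := triple_circuitE alpha ij' jk' ik'.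
Qed.
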